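(* Let $\mathcal M_1=\langle W_1,\le_1,v_1,D_1,\phi_1\rangle$ and $\mathcal M_2=\langle W_2,\le_2,v_2,D_2,\phi_2\rangle$ be G-models for the same relational language, and let $Z$ be a CD-asimulation between $\mathcal M_1$ and $\mathcal M_2$. Let $A[x_1,\dots,x_k]$ be a formula whose free variables are among $x_1,\dots,x_k$, let $\{i,j\}=\{1,2\}$, $t\in W_i$, $\vec d\in D_i^k$, $u\in W_j$, $\vec e\in D_j^k$. If $(t,\vec d)\,Z\,(u,\vec e)$ and $t\Vdash_i A[\vec d]$, then $u\Vdash_j A[\vec e]$.
   Context: Formulas are built from atomic formulas $P x_{l_1}\dots x_{l_m}$ with $\wedge,\vee,\rightarrow,\perp,\forall,\exists$. A G-model is $\mathcal{M}=\langle W,\le,v_0,D,\phi\rangle$: $W$ a nonempty set of states, $\le$ a reflexive transitive relation on $W$, $v_0\in W$ with $v_0\le v$ for all $v\in W$, $D$ a nonempty domain, and for each $k$-ary predicate symbol $P$ a set $\phi(P)\subseteq W\times D^k$ that is monotone: if $v\le w$ and $\langle v,a_1,\dots,a_k\rangle\in\phi(P)$ then $\langle w,a_1,\dots,a_k\rangle\in\phi(P)$. Forcing $\Vdash$ between states and sentences with constants for elements of $D$: atomic $P\mathbf a_1\dots\mathbf a_k$ forced at $v$ iff $\langle v,a_1,\dots,a_k\rangle\in\phi(P)$; $\wedge,\vee$ pointwise; $v\Vdash A\rightarrow B$ iff for all $w\ge v$, $w\Vdash A$ implies $w\Vdash B$; $\perp$ never forced; $\exists x A$ (resp. $\forall xA$)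 forced at $v$ iff $A[\mathbf a/x]$ is forced at $v$ for some (resp. every) $a\in D$. $A[\vec d]$ denotes $A$ with $x_l$ replaced by the constant for $d_l$; $\Vdash_i$ is forcing in $\mathcal M_i$. A CD-asimulation between $\mathcal M_1$ and $\mathcal M_2$ is a relation $Z\subseteq\bigcup_{k\ge0}[(W_1\times D_1^k)\times(W_2\times D_2^k)]\cup[(W_2\times D_2^k)\times(W_1\times D_1^k)]$ such that for all $\{i,j\}=\{1,2\}$: (1) if $(v,\vec d)Z(w,\vec e)$ with $v\in W_i$, and $v\Vdash_i P[\vec d]$ for an atomic formula $P[\vec x]$ with free variables among $x_1,\dots,x_k$, then $w\Vdash_j P[\vec e]$; (2) if $(t,\vec d)Z(u,\vec e)$ with $t\in W_i$, $u\in W_j$, and $u\le_j v$, then there is $w\in W_i$ with $t\le_i w$, $(w,\vec d)Z(v,\vec e)$ and $(v,\vec e)Z(w,\vec d)$; (3) if $t\in W_i$, $(t,\vec d)Z(u,\vec e)$ and $f\in D_i$, then there is $g\in D_j$ with $(t,\vec d f)Z(u,\vec e g)$; (4) if $t\in W_i$, $(t,\vec d)Z(u,\vec e)$ and $g\in D_j$, then there is $f\in D_i$ with $(t,\vec d f)Z(u,\vec e g)$. Here $\vec d f$ denotes the sequence $\vec d$ extended by $f$. *)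

From mathcomp Require Import all_boot.
Set Implicit Arguments. Unset Strict Implicit. Unset Printing Implicit Defensive.

Record Lang := { Pred : Type; arity : Pred -> nat }.

(* Formulas; variable x_l is represented by the index l : nat. *)
Inductive formula (L : Lang) : Type :=
| FAtom : forall P : Pred L, (arity P).-tuple nat -> formula L
| FAnd : formula L -> formula L -> formula L
| FOr : formula L -> formula L -> formula L
| FImp : formula L -> formula L -> formula L
| FBot : formula L
| FAll : nat -> formula L -> formula L
| FEx : nat -> formula L -> formula L.

Fixpoint free_in (L : Lang) (m : nat) (A : formula L) : Prop :=
  match A with
  | FAtom _ ls => m \in (tval ls)
  | FAnd A B | FOr A B | FImp A B => free_in m A \/ free_in m B
  | FBot => False
  | FAll l A | FEx l A => m <> l /\ free_in m A
  end.

Unset Implicit Arguments.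
Record GModel (L : Lang) := {
  W : Type;
  le : W -> W -> Prop;
  le_refl : forall v, le v v;
  le_trans : forall u v w, le u v -> le v w -> le u w;
  root : W;
  root_le : forall v, le root v;
  D : Type;
  d0 : D;  (* D is nonempty *)
  phi : forall P : Pred L, W -> (arity P).-tuple D -> Prop;
  phi_mono : forall (P : Pred L) (v w : W) (a : (arity P).-tuple D),
      le v w -> phi P v a -> phi P w a
}.
Set Implicit Arguments.
Arguments le {L} g _ _.
Arguments root {L} g.
Arguments d0 {L} g.
Arguments phi {L} g P _ _.
Arguments W {L} g.
Arguments D {L} g.

Definition upd (T : Type) (rho : nat -> T) (l : nat) (a : T) : nat -> T :=
  fun m => if m == l then a else rho m.

(* Forcing, relative to an assignment rho of domain elements to variables;
   forcing of A[d_0,...,d_{k-1}] is forcing of A under the assignment x_l |-> d_l. *)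
Fixpoint forces (L : Lang) (M : GModel L) (v : W M) (rho : nat -> D M)
    (A : formula L) {struct A} : Prop :=
  match A with
  | FAtom P ls => phi M P v (map_tuple rho ls)
  | FAnd A B => forces v rho A /\ forces v rho B
  | FOr A B => forces v rho A \/ forces v rho B
  | FImp A B => forall w, le M v w -> forces w rho A -> forces w rho B
  | FBot => False
  | FAll l A => forall a : D M, forces v (upd rho l a) A
  | FEx l A => exists a : D M, forces v (upd rho l a) A
  end.

Definition valu (L : Lang) (M : GModel L) (ds : seq (D M)) : nat -> D M :=
  fun l => nth (d0 M) ds l.

(* One direction (i -> j) of the CD-asimulation conditions.  The relation Z is
   given by its two parts: Zij (pairs from W_i x D_i^k to W_j x D_j^k) and Zji. *)
Definition asim_dir (L : Lang) (Mi Mj : GModel L)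
    (Zij : W Mi -> seq (D Mi) -> W Mj -> seq (D Mj) -> Prop)
    (Zji : W Mj -> seq (D Mj) -> W Mi -> seq (D Mi) -> Prop) : Prop :=
  (forall t d u e, Zij t d u e -> size d = size e) /\
  (forall v d w e (P : Pred L) (ls : (arity P).-tuple nat),
      Zij v d w e -> (forall m, free_in m (FAtom ls) -> m < size d) ->
      forces v (valu d) (FAtom ls) -> forces w (valu e) (FAtom ls)) /\
  (forall t d u e v, Zij t d u e -> le Mj u v ->
      exists w, le Mi t w /\ Zij w d v e /\ Zji v e w d) /\
  (forall t d u e (f : D Mi), Zij t d u e ->
      exists g : D Mj, Zij t (rcons d f) u (rcons e g)) /\
  (forall t d u e (g : D Mj), Zij t d u e ->
      exists f : D Mi, Zij t (rcons d f) u (rcons e g)).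

Definition CD_asim (L : Lang) (M1 M2 : GModel L)
    (Z12 : W M1 -> seq (D M1) -> W M2 -> seq (D M2) -> Prop)
    (Z21 : W M2 -> seq (D M2) -> W M1 -> seq (D M1) -> Prop) : Prop :=
  asim_dir Z12 Z21 /\ asim_dir Z21 Z12.

From mathcomp Require Import all_boot.

(* Induction on A, for both directions of Z at once: the implication case
   transfers the antecedent backwards along the converse relation, supplied by
   clause (2).  To get through the quantifiers, the claim is proved for every
   assignment [valu d \o s], where [s] sends the free variables to positions
   of [d]: a quantifier over x_l extends [d] by one element (clauses (3), (4))
   and redirects x_l to the new last position [size d]. *)

Lemma eq_upd (T : Type) (rho rho' : nat -> T) (l : nat) (a : T) (m : nat) :
  (m <> l -> rho m = rho' m) -> upd rho l a m = upd rho' l a m.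
Proof. by rewrite /upd; case: eqP => // ml ->. Qed.

Lemma forces_free_ext (L : Lang) (M : GModel L) (A : formula L) :
  forall (v : W M) (rho rho' : nat -> D M),
  (forall m, free_in m A -> rho m = rho' m) -> forces v rho A -> forces v rho' A.
Proof.
elim: A => [P ls|A IHA B IHB|A IHA B IHB|A IHA B IHB||l A IHA|l A IHA]
  v rho rho' eq_rho /=.
- suff -> : map_tuple rho ls = map_tuple rho' ls by [].
  by apply: val_inj; apply/eq_in_map => m ls_m; apply: eq_rho.
- case=> FA FB; split.
  + by apply: IHA FA => m Fm; apply: eq_rho; left.
  + by apply: IHB FB => m Fm; apply: eq_rho; right.
- case=> [FA|FB].
  + by left; apply: IHA FA => m Fm; apply: eq_rho; left.
  + by right; apply: IHB FB => m Fm; apply: eq_rho; right.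
- move=> F w vw Aw; apply: (IHB _ rho) => [m Fm|]; first by apply: eq_rho; right.
  by apply: F => //; apply: (IHA _ rho') Aw => m Fm; symmetry; apply: eq_rho; left.
- by [].
- move=> F a; move: (F a); apply: IHA => m Fm.
  by apply: eq_upd => ml; apply: eq_rho.
- case=> a F; exists a; move: F; apply: IHA => m Fm.
  by apply: eq_upd => ml; apply: eq_rho.
Qed.

Arguments forces_free_ext {L M A v rho rho'}.

Lemma upd_valu_rcons (T : Type) (x0 : T) (d : seq T) (f : T) (s : nat -> nat)
    (l m : nat) :
  (m <> l -> s m < size d) ->
  upd (nth x0 d \o s) l f m = (nth x0 (rcons d f) \o upd s l (size d)) m.
Proof.
rewrite /upd /=; case: eqP => [_|/eqP ml] s_m; first by rewrite nth_rcons ltnn eqxx.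
by rewrite nth_rcons s_m //; apply/eqP.
Qed.

Lemma upd_size_lt (s : nat -> nat) (l m n : nat) :
  (m <> l -> s m < n) -> upd s l n m < n.+1.
Proof. by rewrite /upd; case: eqP => [//|/eqP ml s_m]; rewrite ltnS ltnW // s_m //; apply/eqP. Qed.

Definition transfer (L : Lang) (Mi Mj : GModel L)
    (Z : W Mi -> seq (D Mi) -> W Mj -> seq (D Mj) -> Prop) (A : formula L) : Prop :=
  forall t d u e (s : nat -> nat), (forall m, free_in m A -> s m < size d) ->
  Z t d u e -> forces t (valu d \o s) A -> forces u (valu e \o s) A.

Arguments transfer {L Mi Mj}.

Section Transfer.

Context {L : Lang} {Mi Mj : GModel L}.
Context {Zij : W Mi -> seq (D Mi) -> W Mj -> seq (D Mj) -> Prop}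
        {Zji : W Mj -> seq (D Mj) -> W Mi -> seq (D Mi) -> Prop}.
Hypothesis asim : asim_dir Zij Zji.

Let size_asim {t d u e} : Zij t d u e -> size d = size e.
Proof. by case: asim => size_Z _; apply: size_Z. Qed.

Lemma transfer_atom (P : Pred L) (ls : (arity P).-tuple nat) :
  transfer Zij (FAtom ls).
Proof.
case: asim => _ [atom _] t d u e s s_lt Z.
have map_s (M : GModel L) (d' : seq (D M)) :
    map_tuple (valu d' \o s) ls = map_tuple (valu d') (map_tuple s ls).
  by apply: val_inj; rewrite /= map_comp.
rewrite /= !map_s; apply: (atom t d u e P (map_tuple s ls) Z).
by move=> m /mapP [x ls_x ->]; apply: s_lt.
Qed.

Lemma transfer_and (A B : formula L) :
  transfer Zij A -> transfer Zij B -> transfer Zij (FAnd A B).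
Proof.
move=> TA TB t d u e s s_lt Z [FA FB].
split; [apply: (TA t d) FA | apply: (TB t d) FB] => // m Fm; apply: s_lt.
- by left.
- by right.
Qed.

Lemma transfer_or (A B : formula L) :
  transfer Zij A -> transfer Zij B -> transfer Zij (FOr A B).
Proof.
move=> TA TB t d u e s s_lt Z [FA|FB].
- by left; apply: (TA t d) FA => // m Fm; apply: s_lt; left.
- by right; apply: (TB t d) FB => // m Fm; apply: s_lt; right.
Qed.

Lemma transfer_imp (A B : formula L) :
  transfer Zji A -> transfer Zij B -> transfer Zij (FImp A B).
Proof.
move=> TA TB t d u e s s_lt Z /= F v uv Av.
case: asim => _ [_ [back _]]; have [w [tw [Zwv Zvw]]] := back t d u e v Z uv.
apply: (TB w d v e) => //; first by move=> m Fm; apply: s_lt; right.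
apply: F => //; apply: (TA v e w d) => // m Fm.
by rewrite -(size_asim Z); apply: s_lt; left.
Qed.

Lemma transfer_upd (A : formula L) (l : nat) (s : nat -> nat) t d u e f g :
  transfer Zij A -> (forall m, m <> l /\ free_in m A -> s m < size d) ->
  Zij t (rcons d f) u (rcons e g) ->
  forces t (upd (valu d \o s) l f) A -> forces u (upd (valu e \o s) l g) A.
Proof.
move=> TA s_lt Z F.
have de : size d = size e by have := size_asim Z; rewrite !size_rcons => -[].
apply: (forces_free_ext (rho := valu (rcons e g) \o upd s l (size e))).
  by move=> m Fm; rewrite upd_valu_rcons // -de => ml; apply: s_lt.
rewrite -de; apply: (TA t (rcons d f)) => //.
  by move=> m Fm; rewrite size_rcons upd_size_lt // => ml; apply: s_lt.
by apply: forces_free_ext F => m Fm; rewrite upd_valu_rcons // => ml; apply: s_lt.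
Qed.

Lemma transfer_all (l : nat) (A : formula L) :
  transfer Zij A -> transfer Zij (FAll l A).
Proof.
move=> TA t d u e s s_lt Z /= F g.
case: asim => _ [_ [_ [_ forth]]]; have [f Zfg] := forth t d u e g Z.
exact: transfer_upd TA s_lt Zfg (F f).
Qed.

Lemma transfer_ex (l : nat) (A : formula L) :
  transfer Zij A -> transfer Zij (FEx l A).
Proof.
move=> TA t d u e s s_lt Z /= [f F].
case: asim => _ [_ [_ [forth _]]]; have [g Zfg] := forth t d u e f Z.
by exists g; apply: transfer_upd TA s_lt Zfg F.
Qed.

End Transfer.

Lemma transfer_asim {L : Lang} {M1 M2 : GModel L}
    {Z12 : W M1 -> seq (D M1) -> W M2 -> seq (D M2) -> Prop}
    {Z21 : W M2 -> seq (D M2) -> W M1 -> seq (D M1) -> Prop} :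
  CD_asim Z12 Z21 -> forall A, transfer Z12 A /\ transfer Z21 A.
Proof.
case=> asim12 asim21.
elim=> [P ls|A [IA12 IA21] B [IB12 IB21]|A [IA12 IA21] B [IB12 IB21]
       |A [IA12 IA21] B [IB12 IB21]||l A [IA12 IA21]|l A [IA12 IA21]].
- by split; [exact: transfer_atom asim12 P ls | exact: transfer_atom asim21 P ls].
- by split; apply: transfer_and.
- by split; apply: transfer_or.
- by split; [apply: (transfer_imp asim12) | apply: (transfer_imp asim21)].
- by split=> ? ? ? ? ? ? ? [].
- by split; [apply: (transfer_all asim12) | apply: (transfer_all asim21)].
- by split; [apply: (transfer_ex asim12) | apply: (transfer_ex asim21)].
Qed.

Theorem lemma4p1 (L : Lang) (M1 M2 : GModel L)
    (Z12 : W M1 -> seq (D M1) -> W M2 -> seq (D M2) -> Prop)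
    (Z21 : W M2 -> seq (D M2) -> W M1 -> seq (D M1) -> Prop) :
  CD_asim Z12 Z21 ->
  (forall (A : formula L) (k : nat) (t : W M1) (d : seq (D M1))
          (u : W M2) (e : seq (D M2)),
     (forall m, free_in m A -> m < k) -> size d = k -> size e = k ->
     Z12 t d u e -> forces t (valu d) A -> forces u (valu e) A) /\
  (forall (A : formula L) (k : nat) (t : W M2) (d : seq (D M2))
          (u : W M1) (e : seq (D M1)),
     (forall m, free_in m A -> m < k) -> size d = k -> size e = k ->
     Z21 t d u e -> forces t (valu d) A -> forces u (valu e) A).
Proof.
move=> asim; split=> A k t d u e free_lt size_d _ Z F;
  have [T12 T21] := transfer_asim asim A.
- by apply: (T12 t d u e id) => // m; rewrite size_d; apply: free_lt.
- by apply: (T21 t d u e id) => // m; rewrite size_d; apply: free_lt.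
Qed.
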